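(* Let $f:\mathbb{R}^2\to\mathbb{C}$ be smooth and let $Q=I_1\times I_2$ be a rectangle in $\mathbb{R}^2$ ($I_1,I_2$ bounded intervals). For $\alpha=(\alpha_1,\alpha_2)\in\mathbb{Z}^2$ let $Q(\alpha)=\{(x_1,x_2):|I_i|\alpha_i-\tfrac{|I_i|}{2}\le x_i<|I_i|\alpha_i+\tfrac{|I_i|}{2},\ i=1,2\}$. Then there is an absolute constant $C$, independent of $Q$ and $f$, such that $$\sum_{\alpha\in\mathbb{Z}^2}\sup_{Q(\alpha)}|f|^2\le C\Big(\frac{|I_1|}{|I_2|}\int_{\mathbb{R}^2}|\partial_1 f|^2+|Q|\int_{\mathbb{R}^2}|\partial_2\partial_1 f|^2+\frac{|I_2|}{|I_1|}\int_{\mathbb{R}^2}|\partial_2 f|^2+\frac{1}{|Q|}\int_{\mathbb{R}^2}|f|^2\Big).$$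
   Context: $|I|$ denotes the length of an interval and $|Q|=|I_1||I_2|$ the area of $Q$. *)

From HB Require Import structures.
From mathcomp Require Import all_boot all_order all_algebra.
From mathcomp Require Import all_classical all_reals all_analysis.
Set Implicit Arguments. Unset Strict Implicit. Unset Printing Implicit Defensive.
Import Order.TTheory GRing.Theory Num.Theory.
Import numFieldNormedType.Exports.
Local Open Scope classical_set_scope.
Local Open Scope ring_scope.

Definition d1 {R : realType} (g : R -> R -> R) : R -> R -> R :=
  fun x y => derive1 (fun t => g t y) x.
Definition d2 {R : realType} (g : R -> R -> R) : R -> R -> R :=
  fun x y => derive1 (fun t => g x t) y.

(* g is C^infinity on R^2: there is a family (g i j) of jointly continuous
   functions with g 0 0 = g and d/dx_1 g i j = g (i+1) j,
   d/dx_2 g i j = g i (j+1) everywhere (all partial derivatives of all orders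
   exist and are continuous). *)
Definition smooth2 {R : realType} (g : R -> R -> R) : Prop :=
  exists G : nat -> nat -> R -> R -> R,
    G 0%N 0%N = g /\
    forall i j : nat,
      continuous (fun p : R * R => G i j p.1 p.2) /\
      forall x y : R,
        is_derive x 1 (fun t => G i j t y) (G i.+1 j x y) /\
        is_derive y 1 (fun t => G i j x t) (G i j.+1 x y).

(* A complex-valued function f = u + i v is given by its real and imaginary
   parts u, v; |f(x)|^2 = u(x)^2 + v(x)^2. *)
Definition cabs2 {R : realType} (u v : R -> R -> R) (x y : R) : R :=
  u x y ^+ 2 + v x y ^+ 2.

Definition int2 {R : realType} (h : R -> R -> R) : \bar R :=
  (\int[(@lebesgue_measure R \x @lebesgue_measure R)%E]_(p in [set: R * R])
     (h p.1 p.2)%:E)%E.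

Definition cell {R : realType} (l1 l2 : R) (a : int * int) : set (R * R) :=
  [set p | (l1 * a.1%:~R - l1 / 2 <= p.1 < l1 * a.1%:~R + l1 / 2) /\
           (l2 * a.2%:~R - l2 / 2 <= p.2 < l2 * a.2%:~R + l2 / 2)].

Definition supcell {R : realType} (u v : R -> R -> R) (l1 l2 : R)
  (a : int * int) : \bar R :=
  ereal_sup [set (cabs2 u v p.1 p.2)%:E | p in cell l1 l2 a].

From HB Require Import structures.
From mathcomp Require Import all_boot all_order all_algebra.
From mathcomp Require Import all_classical all_reals all_analysis.
From mathcomp Require Import lra ring zify.
From mathcomp Require Import measurable_realfun.
Import Order.TTheory GRing.Theory Num.Theory.
Import numFieldNormedType.Exports.
Local Open Scope classical_set_scope.
Local Open Scope ring_scope.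

Set Implicit Arguments. Unset Strict Implicit. Unset Printing Implicit Defensive.

(* On a cell I1 x I2 of side lengths l1, l2, apply the one-dimensional Sobolev
   inequality |g(x)|^2 <= (2/l) \int_I |g|^2 + 2 l \int_I |g'|^2 first in the
   second variable and then, under both resulting integrals, in the first
   one: this bounds sup |f|^2 over the cell by 4 times the right-hand side of
   the theorem with every integral restricted to the cell.  The cells Q(alpha)
   are pairwise disjoint, so summing over alpha gives the theorem with C = 4.
   The one-dimensional inequality compares g(x) with g at a minimum point of
   g^2 and bounds the difference by Cauchy-Schwarz. *)

Section measurable_pair.
Variable R : realType.

Lemma nbhs_ratr_itvoo (a : R) (P : set R) : nbhs a P ->
  exists q1 q2 : rat, ratr q1 < a < ratr q2 /\ `]ratr q1, ratr q2[ `<=` P.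
Proof.
move=> /nbhs_ballP[e e0 aeP].
have ae : a - e < a by rewrite ltrBlDr ltrDl.
have ea : a < a + e by rewrite ltrDl.
have [q1 /[!in_itv] /= /andP[q1l q1r]] := rat_in_itvoo ae.
have [q2 /[!in_itv] /= /andP[q2l q2r]] := rat_in_itvoo ea.
exists q1, q2; split; first by rewrite q1r q2l.
move=> x /= /[!in_itv] /= /andP[xl xr]; apply: aeP.
rewrite /ball /= ltr_distlC; apply/andP; split; lra.
Qed.

(* An open subset of R * R is the countable union of the rational open
   rectangles it contains, hence lies in the product sigma-algebra. *)
Lemma open_measurable_pair (U : set (R * R)) : open U -> measurable U.
Proof.
move=> oU.
pose rect (q : (rat * rat) * (rat * rat)) : set (R * R) :=
  `]ratr q.1.1, ratr q.1.2[ `*` `]ratr q.2.1, ratr q.2.2[.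
have -> : U = \bigcup_(q in [set q | rect q `<=` U]) rect q.
  apply/seteqP; split => [[a b] Uab|p [q /= qU /qU //]].
  move: oU; rewrite openE => /(_ _ Uab) [[P Q] [Pa Qb] PQU].
  have [q1 [q2 [/andP[q1a aq2] q12P]]] := nbhs_ratr_itvoo Pa.
  have [q3 [q4 [/andP[q3a aq4] q34Q]]] := nbhs_ratr_itvoo Qb.
  exists ((q1, q2), (q3, q4)).
    by move=> [x y] [/= /q12P Px /q34Q Qy]; exact: PQU.
  by split; rewrite /= in_itv /= ?q1a ?aq2 ?q3a ?aq4.
rewrite bigcup_mkcond; apply: countable_bigcupT_measurable => // q.
by case: ifP => // _; apply: measurableX; exact: measurable_itv.
Qed.

Lemma continuous_measurable_pair (f : R * R -> R) :
  continuous f -> measurable_fun setT f.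
Proof.
move=> /continuousP cf; apply: (measurability _ (RGenOpens.measurableE R)).
move=> _ [_ [a [b ->] <-]]; apply: measurableI => //.
by apply: open_measurable_pair; apply: cf; exact: interval_open.
Qed.

End measurable_pair.

Section interval_estimates.
Variable R : realType.
Notation mu := (@lebesgue_measure R).
Implicit Types (g k : R -> R) (a b c l x : R).

Lemma is_derive_continuous g g' :
  (forall x, is_derive x 1 g (g' x)) -> continuous g.
Proof.
move=> dg x; apply: differentiable_continuous; apply/derivable1_diffP.
exact: ex_derive.
Qed.

Lemma continuous_sqr (f : R -> R) : continuous f -> continuous (fun t => f t ^+ 2).
Proof. by move=> cf t; apply: continuousM; exact: cf. Qed.

Lemma continuous_integrable_itvcc (f : R -> R) a b :
  continuous f -> mu.-integrable `[a, b] (EFin \o f).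
Proof.
move=> cf; apply: continuous_compact_integrable; first exact: segment_compact.
exact: continuous_subspaceT.
Qed.

Lemma Rintegral_derive g g' a b : a < b ->
  (forall x, is_derive x 1 g (g' x)) -> continuous g' ->
  \int[mu]_(x in `[a, b]) g' x = g b - g a.
Proof.
move=> ab dg cg'; rewrite /Rintegral (@continuous_FTC2 R g' g a b ab) //.
- exact: continuous_subspaceT.
- have cg := is_derive_continuous dg.
  split; first by move=> x _; exact: ex_derive.
  + by apply: cvg_at_right_filter; exact: cg.
  + by apply: cvg_at_left_filter; exact: cg.
- by move=> x _; rewrite derive1E; exact: derive_val.
Qed.

Lemma le_Rintegral_subitv (h : R -> R) a b c d : continuous h ->
  (forall x, 0 <= h x) -> c <= a -> b <= d ->
  \int[mu]_(x in `[a, b]) h x <= \int[mu]_(x in `[c, d]) h x.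
Proof.
move=> ch h0 ca bd; rewrite /Rintegral fine_le //.
- exact: integrable_fin_num (continuous_integrable_itvcc _ _ ch).
- exact: integrable_fin_num (continuous_integrable_itvcc _ _ ch).
- apply: ge0_subset_integral => //.
  + apply/measurable_EFinP; apply: measurable_funTS.
    exact: continuous_measurable_fun.
  + by move=> x _; rewrite lee_fin.
  + by apply: subset_itv; rewrite bnd_simp.
Qed.

Lemma fine_lebesgue_measure_itvcc a b : a < b -> fine (mu `[a, b]) = b - a.
Proof. by move=> ab; rewrite lebesgue_measure_itv /= lte_fin ab. Qed.

(* Cauchy-Schwarz for g' against 1: expand 0 <= \int (g' - m)^2, where m is
   the mean slope of g on [a, b]. *)
Lemma sqr_sub_le_Rintegral g g' a b : a < b ->
  (forall x, is_derive x 1 g (g' x)) -> continuous g' ->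
  (g b - g a) ^+ 2 <= (b - a) * \int[mu]_(x in `[a, b]) g' x ^+ 2.
Proof.
move=> ab dg cg'; have ba : 0 < b - a by rewrite subr_gt0.
set m := (g b - g a) / (b - a).
have int_cont (f : R -> R) := @continuous_integrable_itvcc f a b.
have cg'2 := continuous_sqr cg'.
have cmg' : continuous (fun x => 2 * m * g' x).
  by move=> x; apply: cvgM; [exact: cvg_cst|exact: cg'].
have : 0 <= \int[mu]_(x in `[a, b]) (g' x ^+ 2 + (m ^+ 2 - 2 * m * g' x)).
  apply: Rintegral_ge0 => x _.
  by rewrite (_ : _ + _ = (g' x - m) ^+ 2) ?sqr_ge0 //; ring.
rewrite RintegralD //; last 2 first.
- exact: int_cont cg'2.
- by apply: int_cont => x; apply: cvgB; [exact: cvg_cst|exact: cmg'].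
rewrite RintegralB //; last 2 first.
- by apply: int_cont => x; exact: cvg_cst.
- exact: int_cont cmg'.
rewrite Rintegral_cst // RintegralZl //; last exact: int_cont cg'.
rewrite fine_lebesgue_measure_itvcc // Rintegral_derive //.
have -> : g b - g a = m * (b - a) by rewrite /m divfK // lt0r_neq0.
set I := \int[mu]_(x in _) _ => I_ge.
have := mulr_ge0 (ltW ba) I_ge; nra.
Qed.

Lemma sqr_sub_le_Rintegral_itv g g' c d s x :
  (forall x, is_derive x 1 g (g' x)) -> continuous g' ->
  s \in `[c, d] -> x \in `[c, d] ->
  (g x - g s) ^+ 2 <= (d - c) * \int[mu]_(t in `[c, d]) g' t ^+ 2.
Proof.
wlog sx : s x / s <= x.
  move=> wl dg cg' sI xI; have [sx|xs] := leP s x; first exact: wl.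
  by rewrite -sqrrN opprB; exact: wl (ltW xs) dg cg' xI sI.
move=> dg cg'.
have I_ge0 : 0 <= \int[mu]_(t in `[c, d]) g' t ^+ 2.
  by apply: Rintegral_ge0 => t _; exact: sqr_ge0.
move=> /[!in_itv] /= /andP[cs sd] /andP[cx xd].
move: sx; rewrite le_eqVlt => /predU1P[->|sx].
  by rewrite subrr expr0n mulr_ge0 // subr_ge0 (le_trans cx).
apply: le_trans (sqr_sub_le_Rintegral sx dg cg') _.
apply: ler_pM; [lra| |lra|].
  by apply: Rintegral_ge0 => t _; exact: sqr_ge0.
exact: le_Rintegral_subitv (continuous_sqr cg') (fun t => sqr_ge0 _) cs xd.
Qed.

(* Write g x = g s + (g x - g s) for a minimum point s of g^2, for which
   l g(s)^2 is at most the integral of g^2. *)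
Lemma sqr_le_Rintegral g g' c l x :
  (forall x, is_derive x 1 g (g' x)) -> continuous g' -> 0 < l ->
  x \in `[c, c + l] ->
  g x ^+ 2 <= 2 / l * \int[mu]_(t in `[c, c + l]) g t ^+ 2
              + 2 * l * \int[mu]_(t in `[c, c + l]) g' t ^+ 2.
Proof.
move=> dg cg' l0 xI; have cg := is_derive_continuous dg.
have cg2 := continuous_sqr cg.
have cl : c <= c + l by rewrite lerDl ltW.
have [s sI s_min] := EVT_min cl (continuous_subspaceT cg2).
have l_gs : g s ^+ 2 * l <= \int[mu]_(t in `[c, c + l]) g t ^+ 2.
  have <- : \int[mu]_(t in `[c, c + l]) g s ^+ 2 = g s ^+ 2 * l.
    rewrite Rintegral_cst // fine_lebesgue_measure_itvcc ?ltrDl //.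
    by rewrite addrAC subrr add0r.
  apply: le_Rintegral => //.
  - exact: continuous_integrable_itvcc (fun t => cvg_cst _).
  - exact: continuous_integrable_itvcc cg2.
have := sqr_sub_le_Rintegral_itv dg cg' sI xI; rewrite addrAC subrr add0r.
set A := \int[mu]_(t in _) g t ^+ 2 in l_gs *.
set B := \int[mu]_(t in _) g' t ^+ 2 => sub_le.
have gs_le : g s ^+ 2 <= A / l by rewrite ler_pdivlMr.
have -> : 2 / l * A = 2 * (A / l) by rewrite mulrAC mulrA.
have := sqr_ge0 (g x - 2 * g s); nra.
Qed.

Lemma integral_itvco_Rintegral (h : R -> R) c d : continuous h ->
  (\int[mu]_(t in `[c, d[) (h t)%:E = (\int[mu]_(t in `[c, d]) h t)%:E)%E.
Proof.
move=> ch; rewrite integral_itv_bndo_bndc; last first.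
  by apply/measurable_EFinP; apply: measurable_funTS; exact: continuous_measurable_fun.
rewrite /Rintegral fineK //.
exact: integrable_fin_num (continuous_integrable_itvcc _ _ ch).
Qed.

Lemma sumsqr_le_integral_itvco g g' k k' c l x :
  (forall x, is_derive x 1 g (g' x)) -> (forall x, is_derive x 1 k (k' x)) ->
  continuous g' -> continuous k' -> 0 < l -> x \in `[c, c + l[ ->
  ((g x ^+ 2 + k x ^+ 2)%:E <=
   (2 / l)%:E * \int[mu]_(t in `[c, (c + l)%R[) (g t ^+ 2 + k t ^+ 2)%:E
   + (2 * l)%:E * \int[mu]_(t in `[c, (c + l)%R[) (g' t ^+ 2 + k' t ^+ 2)%:E)%E.
Proof.
move=> dg dk cg' ck' l0 xI.
have xI' : x \in `[c, c + l] by move: xI; rewrite !in_itv /= => /andP[-> /ltW ->].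
have cg := is_derive_continuous dg; have ck := is_derive_continuous dk.
have int_csqr (f : R -> R) (cf : continuous f) :=
  continuous_integrable_itvcc c (c + l) (continuous_sqr cf).
rewrite !integral_itvco_Rintegral; last 2 first.
- by move=> t; apply: cvgD; exact: continuous_sqr.
- by move=> t; apply: cvgD; exact: continuous_sqr.
rewrite -!EFinM -EFinD lee_fin !RintegralD //; try exact: int_csqr.
have := sqr_le_Rintegral dg cg' l0 xI'; have := sqr_le_Rintegral dk ck' l0 xI'.
lra.
Qed.

End interval_estimates.

Section rectangle_integrals.
Variable R : realType.
Notation mu := (@lebesgue_measure R).
Implicit Types (H g k : R -> R -> R) (I J : set R).

Definition jointly_continuous H := continuous (fun p : R * R => H p.1 p.2).

Lemma jointly_continuous_cabs2 g k :
  jointly_continuous g -> jointly_continuous k -> jointly_continuous (cabs2 g k).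
Proof.
move=> cg ck p; rewrite /cabs2.
by apply: cvgD; apply: cvgM; [exact: cg|exact: cg|exact: ck|exact: ck].
Qed.

Lemma cabs2_ge0 g k x y : 0 <= cabs2 g k x y.
Proof. by rewrite /cabs2 addr_ge0 // sqr_ge0. Qed.

Lemma jointly_continuous_slice1 H y :
  jointly_continuous H -> continuous (fun x => H x y).
Proof.
move=> cH x; have pair_cvg : (fun x => (x, y)) @ x --> (x, y).
  exact: cvg_pair cvg_id (cvg_cst y).
exact: continuous_comp pair_cvg (cH (x, y)).
Qed.

Lemma jointly_continuous_slice2 H x :
  jointly_continuous H -> continuous (fun y => H x y).
Proof.
move=> cH y; have pair_cvg : (fun y => (x, y)) @ y --> (x, y).
  exact: cvg_pair (cvg_cst x) cvg_id.
exact: continuous_comp pair_cvg (cH (x, y)).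
Qed.

Lemma measurable_jointly_continuous H : jointly_continuous H ->
  measurable_fun setT (fun p : R * R => (H p.1 p.2)%:E).
Proof. by move=> cH; apply/measurable_EFinP; exact: continuous_measurable_pair. Qed.

Local Open Scope ereal_scope.

Lemma measurable_integral_slice H I : measurable I -> jointly_continuous H ->
  (forall x y, (0 <= H x y)%R) ->
  measurable_fun setT (fun y => \int[mu]_(x in I) (H x y)%:E).
Proof.
move=> mI cH H0.
pose f := (fun p : R * R => (H p.1 p.2)%:E) \_ (I `*` [set: R]).
have mf : measurable_fun setT f.
  apply/(measurable_restrictT _ _).1; first exact: measurableX.
  exact: measurable_funTS (measurable_jointly_continuous cH).
have f0 p : 0 <= f p by rewrite /f /patch; case: ifP; rewrite ?lee_fin.
have := @measurable_fun_fubini_tonelli_G _ _ _ _ _ mu f mf f0.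
apply: eq_measurable_fun => y _.
rewrite /fubini_G [RHS]integral_mkcond.
by apply: eq_integral => x _; rewrite /f /patch in_setX in_setT andbT.
Qed.

Definition rect_integral H I J := \int[mu]_(y in J) \int[mu]_(x in I) (H x y)%:E.

Lemma rect_integral_ge0 H I J :
  (forall x y, (0 <= H x y)%R) -> 0 <= rect_integral H I J.
Proof.
by move=> H0; apply: integral_ge0 => y _; apply: integral_ge0 => x _; rewrite lee_fin.
Qed.

Lemma rect_integralE H I J : measurable I -> measurable J -> jointly_continuous H ->
  (forall x y, (0 <= H x y)%R) ->
  rect_integral H I J = \int[mu \x mu]_(p in I `*` J) (H p.1 p.2)%:E.
Proof.
move=> mI mJ cH H0.
pose f := (fun p : R * R => (H p.1 p.2)%:E) \_ (I `*` J).
have mf : measurable_fun setT f.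
  apply/(measurable_restrictT _ _).1; first exact: measurableX.
  exact: measurable_funTS (measurable_jointly_continuous cH).
have f0 p : 0 <= f p by rewrite /f /patch; case: ifP; rewrite ?lee_fin.
rewrite [RHS]integral_mkcond fubini_tonelli2 // /rect_integral integral_mkcond.
apply: eq_integral => y _; rewrite /fubini_G /patch; case: ifP => Jy.
  rewrite [LHS]integral_mkcond; apply: eq_integral => x _.
  by rewrite /patch in_setX /= Jy andbT.
by apply/esym; apply: integral0_eq => x _; rewrite in_setX /= Jy andbF.
Qed.

Lemma fsum_rect_integral_le_int2 (T : choiceType) (X : set T) (I J : T -> set R) H :
  finite_set X -> (forall a, measurable (I a)) -> (forall a, measurable (J a)) ->
  trivIset X (fun a => I a `*` J a) ->
  jointly_continuous H -> (forall x y, (0 <= H x y)%R) ->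
  \sum_(a \in X) rect_integral H (I a) (J a) <= int2 H.
Proof.
move=> finX mI mJ tIJ cH H0; have mIJ a : measurable (I a `*` J a).
  exact: measurableX.
have mH := measurable_jointly_continuous cH.
have H0' (p : R * R) : 0 <= (H p.1 p.2)%:E by rewrite lee_fin.
rewrite fsbig_finite //=.
under eq_bigr do rewrite rect_integralE //.
rewrite -ge0_integral_bigsetU //; last 2 first.
- by apply: sub_trivIset tIJ => a /=; rewrite in_fset_set // inE.
- exact: measurable_funTS.
apply: ge0_subset_integral => //; apply: bigsetU_measurable => a _; exact: mIJ.
Qed.

End rectangle_integrals.

Section ereal_scaling.
Variable R : realType.
Local Open Scope ereal_scope.

Lemma ge0_EFin_muleDr (a b c : R) (x y : \bar R) : (0 <= b)%R -> (0 <= c)%R ->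
  0 <= x -> 0 <= y -> a%:E * (b%:E * x + c%:E * y) = (a * b)%:E * x + (a * c)%:E * y.
Proof.
move=> b0 c0 x0 y0; rewrite ge0_muleDr ?mule_ge0 ?lee_fin //.
by rewrite !muleA -!EFinM.
Qed.

Lemma iterated_bound_le (l1 l2 : R) (A B p00 p10 p01 p11 : \bar R) :
  (0 < l1)%R -> (0 < l2)%R -> 0 <= p00 -> 0 <= p10 -> 0 <= p01 -> 0 <= p11 ->
  A <= (2 / l1)%:E * p00 + (2 * l1)%:E * p10 ->
  B <= (2 / l1)%:E * p01 + (2 * l1)%:E * p11 ->
  (2 / l2)%:E * A + (2 * l2)%:E * B <=
  4%:E * ((l1 / l2)%:E * p10 + (l1 * l2)%:E * p11
          + (l2 / l1)%:E * p01 + (l1 * l2)^-1%:E * p00).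
Proof.
move=> l10 l20 p00_ge0 p10_ge0 p01_ge0 p11_ge0 A_le B_le.
have c0 (r : R) : (0 < r)%R -> (0 <= 2 / r)%R /\ (0 <= 2 * r)%R.
  by move=> r0; rewrite divr_ge0 ?mulr_ge0 // ltW.
have [a1 b1] := c0 _ l10; have [a2 b2] := c0 _ l20.
apply: le_trans (leeD (lee_wpmul2l _ A_le) (lee_wpmul2l _ B_le)) _; rewrite ?lee_fin //.
rewrite !ge0_EFin_muleDr //.
have [c10 c11 c01 c00] :
    [/\ 0 <= l1 / l2, 0 <= l1 * l2, 0 <= l2 / l1 & 0 <= (l1 * l2)^-1]%R.
  by split; rewrite ?invr_ge0 ?divr_ge0 ?mulr_ge0 ?ltW.
have [t10 t11 t01 t00] : [/\ 0 <= (l1 / l2)%:E * p10, 0 <= (l1 * l2)%:E * p11,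
    0 <= (l2 / l1)%:E * p01 & 0 <= (l1 * l2)^-1%:E * p00].
  by split; rewrite mule_ge0 ?lee_fin.
rewrite (ge0_muleDr _ (adde_ge0 (adde_ge0 t10 t11) t01) t00).
rewrite (ge0_muleDr _ (adde_ge0 t10 t11) t01) (ge0_muleDr _ t10 t11) !muleA -!EFinM.
have l1_neq0 : l1 != 0%R by rewrite lt0r_neq0.
have l2_neq0 : l2 != 0%R by rewrite lt0r_neq0.
have -> : (2 / l2 * (2 / l1) = 4 / (l1 * l2))%R by field; apply/andP.
have -> : (2 / l2 * (2 * l1) = 4 * (l1 / l2))%R by field.
have -> : (2 * l2 * (2 / l1) = 4 * (l2 / l1))%R by field.
have -> : (2 * l2 * (2 * l1) = 4 * (l1 * l2))%R by ring.
by rewrite addeACA addeC addeA addeAC.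
Qed.

Lemma fsum_EFin_mule_le (T : choiceType) (X : set T) (c : R) (f : T -> \bar R) M :
  finite_set X -> (0 <= c)%R -> (forall a, 0 <= f a) -> \sum_(a \in X) f a <= M ->
  \sum_(a \in X) c%:E * f a <= c%:E * M.
Proof.
move=> finX c0 f0 fM; rewrite -ge0_mule_fsumr //.
by apply: lee_wpmul2l; rewrite ?lee_fin.
Qed.

End ereal_scaling.

Section pointwise_bound.
Variable R : realType.
Notation mu := (@lebesgue_measure R).

Definition smooth_family (U : nat -> nat -> R -> R -> R) :=
  forall i j, jointly_continuous (U i j) /\
    forall x y : R, is_derive x 1%R (fun t => U i j t y) (U i.+1 j x y) /\
                    is_derive y 1%R (fun t => U i j x t) (U i j.+1 x y).

Lemma d1_smooth_family (U : nat -> nat -> R -> R -> R) i j :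
  smooth_family U -> d1 (U i j) = U i.+1 j.
Proof.
move=> sU; apply/funext => x; apply/funext => y.
by rewrite /d1 derive1E; apply: derive_val; exact: ((sU i j).2 x y).1.
Qed.

Lemma d2_smooth_family (U : nat -> nat -> R -> R -> R) i j :
  smooth_family U -> d2 (U i j) = U i j.+1.
Proof.
move=> sU; apply/funext => x; apply/funext => y.
by rewrite /d2 derive1E; apply: derive_val; exact: ((sU i j).2 x y).2.
Qed.

Local Open Scope ereal_scope.

Lemma integral_slice_le (g k g1 k1 : R -> R -> R) (c l x : R) (J : set R) :
  jointly_continuous g -> jointly_continuous k ->
  jointly_continuous g1 -> jointly_continuous k1 ->
  (forall x y : R, is_derive x 1%R (g ^~ y) (g1 x y)) ->
  (forall x y : R, is_derive x 1%R (k ^~ y) (k1 x y)) ->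
  measurable J -> (0 < l)%R -> x \in `[c, (c + l)%R[ ->
  \int[mu]_(y in J) (cabs2 g k x y)%:E <=
  (2 / l)%:E * rect_integral (cabs2 g k) `[c, (c + l)%R[ J
  + (2 * l)%:E * rect_integral (cabs2 g1 k1) `[c, (c + l)%R[ J.
Proof.
move=> cg ck cg1 ck1 dg dk mJ l0 xI.
pose F g k y := \int[mu]_(x in `[c, (c + l)%R[) (cabs2 g k x y)%:E.
have mF g' k' : jointly_continuous g' -> jointly_continuous k' ->
    measurable_fun J (F g' k').
  move=> cg' ck'; apply: measurable_funTS; apply: measurable_integral_slice => //.
    exact: jointly_continuous_cabs2.
  exact: cabs2_ge0.
have F_ge0 g' k' y : 0 <= F g' k' y.
  by apply: integral_ge0 => x' _; rewrite lee_fin cabs2_ge0.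
have a0 : (0 <= 2 / l)%R by rewrite divr_ge0 // ltW.
have b0 : (0 <= 2 * l)%R by rewrite mulr_ge0 // ltW.
rewrite /rect_integral -!ge0_integralZl //; first last.
- by move=> y _; exact: F_ge0.
- by apply: mF.
- by move=> y _; exact: F_ge0.
- by apply: mF.
rewrite -ge0_integralD //; last 4 first.
- by move=> y _; rewrite mule_ge0 //; exact: F_ge0.
- exact: measurable_funeM (mF _ _ cg ck).
- by move=> y _; rewrite mule_ge0 //; exact: F_ge0.
- exact: measurable_funeM (mF _ _ cg1 ck1).
apply: ge0_le_integral => //.
- by move=> y _; rewrite lee_fin cabs2_ge0.
- apply/measurable_EFinP; apply: measurable_funTS.
  have := @jointly_continuous_slice2 _ _ x (jointly_continuous_cabs2 cg ck).
  exact: continuous_measurable_fun.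
- by apply: emeasurable_funD; apply: measurable_funeM; exact: mF.
move=> y _; apply: sumsqr_le_integral_itvco => //.
- exact: jointly_continuous_slice1 cg1.
- exact: jointly_continuous_slice1 ck1.
Qed.

Section smooth_pair.
Variables (U V : nat -> nat -> R -> R -> R) (c1 l1 c2 l2 : R).
Hypotheses (sU : smooth_family U) (sV : smooth_family V).
Hypotheses (l10 : (0 < l1)%R) (l20 : (0 < l2)%R).
Let F i j := cabs2 (U i j) (V i j).
Let I1 := `[c1, (c1 + l1)%R[.
Let I2 := `[c2, (c2 + l2)%R[.
Let Q h := rect_integral h [set` I1] [set` I2].

Lemma cabs2_le_rect_integrals x y : x \in I1 -> y \in I2 ->
  (F 0 0 x y)%:E <= 4%:E * ((l1 / l2)%:E * Q (F 1 0) + (l1 * l2)%:E * Q (F 1 1)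
                          + (l2 / l1)%:E * Q (F 0 1) + (l1 * l2)^-1%:E * Q (F 0 0)).
Proof.
move=> xI yI.
have cU i j := (sU i j).1; have cV i j := (sV i j).1.
have d1U i j x' y' := ((sU i j).2 x' y').1; have d1V i j x' y' := ((sV i j).2 x' y').1.
have d2U i j y' := ((sU i j).2 x y').2; have d2V i j y' := ((sV i j).2 x y').2.
have Q_ge0 i j : 0 <= Q (F i j) by apply: rect_integral_ge0 => *; exact: cabs2_ge0.
have slice_le j : \int[mu]_(t in [set` I2]) (F 0%N j x t)%:E <=
    (2 / l1)%:E * Q (F 0%N j) + (2 * l1)%:E * Q (F 1%N j).
  exact: integral_slice_le (d1U 0%N j) (d1V 0%N j) (measurable_itv I2) l10 xI.
apply: le_trans (sumsqr_le_integral_itvco (d2U 0%N 0%N) (d2V 0%N 0%N)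
  (jointly_continuous_slice2 (cU 0%N 1%N)) (jointly_continuous_slice2 (cV 0%N 1%N))
  l20 yI) _.
by apply: iterated_bound_le => //; exact: slice_le.
Qed.

End smooth_pair.

End pointwise_bound.

Section cells.
Variable R : realType.

Definition cell_itv (l : R) (a : int) : interval R :=
  `[l * a%:~R - l / 2, l * a%:~R - l / 2 + l[.

Lemma cellE l1 l2 a :
  cell l1 l2 a = [set` cell_itv l1 a.1] `*` [set` cell_itv l2 a.2].
Proof.
have E (l : R) (b : int) : l * b%:~R - l / 2 + l = l * b%:~R + l / 2 by field.
by apply/seteqP; split => p; rewrite /cell /cell_itv /= !in_itv /= !E.
Qed.

Lemma cell_itv_inj l a b x : 0 < l ->
  x \in cell_itv l a -> x \in cell_itv l b -> a = b.
Proof.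
move=> l0; rewrite !in_itv /= => /andP[xa ax] /andP[xb bx].
have lt1 (m n : int) : l * m%:~R - l / 2 <= x -> x < l * n%:~R - l / 2 + l ->
    (m < n + 1)%R.
  move=> mx xn; rewrite -(ltr_int R) -(ltr_pM2l l0) intrD mulrDr; lra.
have := lt1 _ _ xa bx; have := lt1 _ _ xb ax; lia.
Qed.

Lemma trivIset_cells l1 l2 : 0 < l1 -> 0 < l2 ->
  trivIset setT (fun a => [set` cell_itv l1 a.1] `*` [set` cell_itv l2 a.2]).
Proof.
move=> l10 l20 [a1 a2] [b1 b2] _ _ [[x y] [[/= xa ya] [/= xb yb]]].
by rewrite (cell_itv_inj l10 xa xb) (cell_itv_inj l20 ya yb).
Qed.

End cells.

Section cell_decomposition.
Variables (R : realType) (U V : nat -> nat -> R -> R -> R) (l1 l2 : R).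
Hypotheses (sU : smooth_family U) (sV : smooth_family V).
Hypotheses (l10 : 0 < l1) (l20 : 0 < l2).
Let F i j := cabs2 (U i j) (V i j).
Let Q i j a := rect_integral (F i j) [set` cell_itv l1 a.1] [set` cell_itv l2 a.2].
Local Open Scope ereal_scope.

Lemma supcell_le_cell_integrals a : supcell (U 0 0) (V 0 0) l1 l2 a <=
  4%:E * ((l1 / l2)%:E * Q 1 0 a + (l1 * l2)%:E * Q 1 1 a
          + (l2 / l1)%:E * Q 0 1 a + (l1 * l2)^-1%:E * Q 0 0 a).
Proof.
apply: ge_ereal_sup => _ [p + <-]; rewrite cellE => -[/= p1 p2].
exact: cabs2_le_rect_integrals.
Qed.

Lemma fsum_cell_integrals_le_int2 i j (X : set (int * int)) : finite_set X ->
  \sum_(a \in X) Q i j a <= int2 (F i j).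
Proof.
move=> finX; apply: fsum_rect_integral_le_int2 => //.
- exact: sub_trivIset (trivIset_cells l10 l20).
- by apply: jointly_continuous_cabs2; [exact: (sU i j).1|exact: (sV i j).1].
- exact: cabs2_ge0.
Qed.

Lemma esum_supcell_le : \esum_(a in [set: int * int]) supcell (U 0 0) (V 0 0) l1 l2 a <=
  4%:E * ((l1 / l2)%:E * int2 (F 1 0) + (l1 * l2)%:E * int2 (F 1 1)
          + (l2 / l1)%:E * int2 (F 0 1) + (l1 * l2)^-1%:E * int2 (F 0 0)).
Proof.
have Q_ge0 i j a : 0 <= Q i j a by apply: rect_integral_ge0 => *; exact: cabs2_ge0.
have [c10 c11 c01 c00] :
    [/\ 0 <= l1 / l2, 0 <= l1 * l2, 0 <= l2 / l1 & 0 <= (l1 * l2)^-1]%R.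
  by split; rewrite ?invr_ge0 ?divr_ge0 ?mulr_ge0 ?ltW.
apply: ge_ereal_sup => _ [X [finX _] <-].
apply: le_trans (lee_fsum finX (fun a _ => supcell_le_cell_integrals a)) _.
rewrite -ge0_mule_fsumr; last first.
  by move=> a; rewrite !adde_ge0 //; apply: mule_ge0; rewrite ?lee_fin.
apply: lee_wpmul2l => //; rewrite !fsbig_split //=.
apply: leeD; [apply: leeD; [apply: leeD|]|];
  by apply: fsum_EFin_mule_le (fsum_cell_integrals_le_int2 _ _ finX) => // a.
Qed.

End cell_decomposition.

Theorem mainTheorem3 (R : realType) :
  exists C : R, 0 < C /\
  forall (a1 b1 a2 b2 : R) (u v : R -> R -> R),
    a1 < b1 -> a2 < b2 -> smooth2 u -> smooth2 v ->
    let l1 := b1 - a1 in let l2 := b2 - a2 in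
    (\esum_(al in [set: int * int]) supcell u v l1 l2 al
     <= C%:E * ((l1 / l2)%:E * int2 (cabs2 (d1 u) (d1 v))
               + (l1 * l2)%:E * int2 (cabs2 (d2 (d1 u)) (d2 (d1 v)))
               + (l2 / l1)%:E * int2 (cabs2 (d2 u) (d2 v))
               + (l1 * l2)^-1%:E * int2 (cabs2 u v)))%E.
Proof.
exists 4; split => // a1 b1 a2 b2 _ _ ab1 ab2 [U [<- sU]] [V [<- sV]].
rewrite !d1_smooth_family // !d2_smooth_family //.
have l10 : 0 < b1 - a1 by rewrite subr_gt0.
have l20 : 0 < b2 - a2 by rewrite subr_gt0.
exact: esum_supcell_le.
Qed.
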